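(* Let $n\ge 3$ and let $(e_1,\dots,e_n)$ be a basis of unit vectors of an $n$-dimensional real inner product space $V$. Then the following are equivalent: (a) For every $1\le k\le n-1$ and every $v\in T_{n-k}$, $P_kv=M_kv$. (b) For every $1\le k\le n-1$, the vector $P_ke_{k+1}$ is parallel to $e_k$ (i.e. a scalar multiple of $e_k$). (c) For every $2\le k\le n-1$, the subspaces $M_k'S_{k-1}$ and $M_k'T_{n-k}$ are orthogonal. (d) For every $1\le k\le n-1$ and every $v\in S_k$, $Q_{n-k}v=M_{k+1}v$. (e) For every $1\le k\le n-1$, the vector $Q_{n-k}e_k$ is parallel to $e_{k+1}$.
   Context: For $k=0,\dots,n$, $S_k=\mathrm{span}\{e_1,\dots,e_k\}$ and $T_k=\mathrm{span}\{e_{n-k+1},\dots,e_n\}$ (so $T_{n-k}=\mathrm{span}\{e_{k+1},\dots,e_n\}$, and $S_0=T_0=\{0\}$). $P_k$ and $Q_k$ denote the orthogonal projections onto $S_k$ and $T_k$ respectively. $M_k$ denotes the orthogonal projection onto the line spanned by $e_k$ (which equals $S_k\cap T_{n-k+1}$), and $M_k'=I-M_k$. *)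

(* V is modelled as the row space 'rV[R]_n with the standard
   inner product; R is an arbitrary real (ordered) field. *)
From mathcomp Require Import all_boot all_order all_algebra.
Set Implicit Arguments. Unset Strict Implicit. Unset Printing Implicit Defensive.
Import Order.TTheory GRing.Theory Num.Theory.
Local Open Scope ring_scope.

Definition dotv (R : fieldType) (n : nat) (u v : 'rV[R]_n) : R := (u *m v^T) 0 0.

(* Orthogonal projection onto the row space of A : projection onto <<A>>
   along its orthogonal complement kermx A^T = {u | u ⟂ every row of A}.
   A vector v is mapped to  v *m oproj A. *)
Definition oproj (R : fieldType) (m n : nat) (A : 'M[R]_(m, n)) : 'M[R]_n :=
  proj_mx <<A>>%MS (kermx A^T).

(* The basis vectors are e 1, ..., e n (paper indexing; e j for other j is
   irrelevant). Subspaces are given as row spaces of matrices. *)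
(* S_k = span{e_1,...,e_k}  (row i, 0-based, is e_(i+1) if i < k, else 0) *)
Definition Smx (R : fieldType) (n : nat) (e : nat -> 'rV[R]_n) (k : nat)
  : 'M[R]_n := \matrix_(i < n) (if (i < k)%N then e i.+1 else 0).

(* T_k = span{e_(n-k+1),...,e_n} *)
Definition Tmx (R : fieldType) (n : nat) (e : nat -> 'rV[R]_n) (k : nat)
  : 'M[R]_n := \matrix_(i < n) (if (n - k <= i)%N then e i.+1 else 0).

Definition Pk (R : fieldType) n (e : nat -> 'rV[R]_n) k : 'M[R]_n := oproj (Smx e k).
Definition Qk (R : fieldType) n (e : nat -> 'rV[R]_n) k : 'M[R]_n := oproj (Tmx e k).
Definition Mk (R : fieldType) n (e : nat -> 'rV[R]_n) k : 'M[R]_n := oproj (e k).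
Definition Mk' (R : fieldType) n (e : nat -> 'rV[R]_n) k : 'M[R]_n := 1%:M - Mk e k.

Definition unit_basis (R : fieldType) n (e : nat -> 'rV[R]_n) : Prop :=
  row_free (\matrix_(i < n) e i.+1) /\
  (forall i, (1 <= i <= n)%N -> dotv (e i) (e i) = 1).

Definition parallel (R : fieldType) n (u v : 'rV[R]_n) : Prop :=
  exists c : R, u = c *: v.

From mathcomp Require Import all_boot all_order all_algebra.
From mathcomp Require Import zify ring.
Set Implicit Arguments. Unset Strict Implicit. Unset Printing Implicit Defensive.
Import Order.TTheory GRing.Theory Num.Theory.
Local Open Scope ring_scope.

(* Write g i j for the Gram entry <e_i, e_j>.  The proof shows that each of
   the five conditions is equivalent to the Gram factorisation property G
   (gram_factor below)

       g i j = g i k * g k j      for all 1 <= i < k < j <= n, *)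

Section InnerProduct.
Variables (R : fieldType) (n : nat).
Implicit Types (u v w : 'rV[R]_n) (a : R).

Lemma dotvC u v : dotv u v = dotv v u.
Proof. by rewrite /dotv -{1}(trmxK u) -trmx_mul mxE. Qed.

Lemma dotvBl u v w : dotv (u - v) w = dotv u w - dotv v w.
Proof. by rewrite /dotv mulmxBl !mxE. Qed.

Lemma dotvBr u v w : dotv w (u - v) = dotv w u - dotv w v.
Proof. by rewrite !(dotvC w) dotvBl. Qed.

Lemma dotvZl a u w : dotv (a *: u) w = a * dotv u w.
Proof. by rewrite /dotv -scalemxAl mxE. Qed.

Lemma dotvZr a u w : dotv w (a *: u) = a * dotv w u.
Proof. by rewrite !(dotvC w) dotvZl. Qed.

Lemma dotv0l u : dotv 0 u = 0.
Proof. by rewrite /dotv mul0mx mxE. Qed.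

Lemma dotv0r u : dotv u 0 = 0.
Proof. by rewrite dotvC dotv0l. Qed.

Lemma mul_trmxE m p (M : 'M[R]_(m, n)) (N : 'M[R]_(p, n)) r s :
  (M *m N^T) r s = dotv (row r M) (row s N).
Proof. by rewrite /dotv !mxE; apply: eq_bigr => i _; rewrite !mxE. Qed.

Lemma mulmx_eq_on_span m (A : 'M[R]_(m, n)) (X Y : 'M[R]_n) v :
  (forall r, row r A *m X = row r A *m Y) -> (v <= A)%MS -> v *m X = v *m Y.
Proof.
move=> Hrows /submxP[D ->].
have AXY : A *m X = A *m Y by apply/row_matrixP => r; rewrite !row_mul.
by rewrite -!mulmxA AXY.
Qed.

Lemma dotv_eq0_on_spans m p (A : 'M[R]_(m, n)) (B : 'M[R]_(p, n)) (X Y : 'M[R]_n) u w :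
  (forall r s, dotv (row r A *m X) (row s B *m Y) = 0) ->
  (u <= A)%MS -> (w <= B)%MS -> dotv (u *m X) (w *m Y) = 0.
Proof.
move=> Hrows /submxP[D ->] /submxP[D' ->].
have AB0 : A *m X *m (B *m Y)^T = 0.
  by apply/matrixP => r s; rewrite mul_trmxE !row_mul Hrows mxE.
by rewrite /dotv -!mulmxA trmx_mul !mulmxA -(mulmxA D) -(mulmxA D) AB0 mulmx0 mul0mx mxE.
Qed.

End InnerProduct.

Section OrthogonalProjection.
Variables (R : realFieldType) (n : nat).
Implicit Types (v w x : 'rV[R]_n) (c : R).

Lemma dotv_anisotropic x : dotv x x = 0 -> x = 0.
Proof.
rewrite /dotv mxE => Hsum.
have Hsq j : true -> 0 <= x 0 j * x^T j 0 by rewrite mxE -expr2 sqr_ge0.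
apply/rowP => j; have /eqP := @psumr_eq0P _ _ _ _ Hsq Hsum j isT.
by rewrite !mxE mulf_eq0 orbb => /eqP.
Qed.

Lemma orth_sub0 m (A : 'M[R]_(m, n)) x : (x <= A)%MS -> x *m A^T = 0 -> x = 0.
Proof.
move=> /submxP[y ->] Horth; apply: dotv_anisotropic.
by rewrite /dotv trmx_mul mulmxA Horth mul0mx mxE.
Qed.

(* The row space of A and its orthogonal complement span the whole space,
   so oproj A is a genuine projection. *)
Lemma oproj_full m (A : 'M[R]_(m, n)) : row_full (<<A>> + kermx A^T)%MS.
Proof.
rewrite /row_full mxrank_disjoint_sum.
  by rewrite mxrank_gen mxrank_ker mxrank_tr subnKC ?rank_leq_col.
apply/eqP/rowV0P => v; rewrite sub_capmx genmxE => /andP[Hv /sub_kermxP Hk].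
exact: orth_sub0 Hv Hk.
Qed.

Lemma oproj_sub m (A : 'M[R]_(m, n)) v : (v *m oproj A <= A)%MS.
Proof. by apply: submx_trans (proj_mx_sub _ _ _) _; rewrite genmxE. Qed.

Lemma oproj_residual m (A : 'M[R]_(m, n)) v : (v - v *m oproj A) *m A^T = 0.
Proof.
apply/sub_kermxP; apply: proj_mx_compl_sub; exact: submx_full (oproj_full A).
Qed.

Lemma oproj_orth m (A : 'M[R]_(m, n)) v a : (a <= A)%MS ->
  dotv (v - v *m oproj A) a = 0.
Proof.
by move=> /submxP[D ->]; rewrite /dotv trmx_mul mulmxA oproj_residual mul0mx mxE.
Qed.

Lemma oprojP m (A : 'M[R]_(m, n)) v w : (w <= A)%MS ->
  (forall r, dotv (v - w) (row r A) = 0) -> v *m oproj A = w.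
Proof.
move=> Hw Horth.
have Hw0 : (v - w) *m A^T = 0 by apply/rowP => r; rewrite mul_trmxE row_id Horth mxE.
apply/eqP; rewrite -subr_eq0; apply/eqP; apply: (orth_sub0 (A := A)).
  by rewrite addmx_sub ?eqmx_opp ?oproj_sub.
have -> : v *m oproj A - w = (v - w) - (v - v *m oproj A).
  by rewrite opprB [RHS]addrC addrA subrK.
by rewrite mulmxBl Hw0 oproj_residual subrr.
Qed.

Lemma oproj_line m (A : 'M[R]_(m, n)) v w :
  dotv w w = 1 -> (w <= A)%MS ->
  (forall r, dotv v (row r A) = dotv v w * dotv w (row r A)) ->
  v *m oproj A = dotv v w *: w.
Proof.
move=> Hw1 HwA Hfac; apply: oprojP; first by rewrite scalemx_sub.
by move=> r; rewrite dotvBl dotvZl Hfac subrr.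
Qed.

Lemma oproj_parallel_factor m (A : 'M[R]_(m, n)) v w a c :
  dotv w w = 1 -> (w <= A)%MS -> (a <= A)%MS -> v *m oproj A = c *: w ->
  dotv v a = dotv v w * dotv w a.
Proof.
move=> Hw1 HwA HaA Hproj.
have Hfac b : (b <= A)%MS -> dotv v b = c * dotv w b.
  by move=> /(oproj_orth v) /eqP; rewrite Hproj dotvBl dotvZl subr_eq0 => /eqP.
by rewrite (Hfac a HaA) (Hfac w HwA) Hw1 mulr1.
Qed.

End OrthogonalProjection.

Section UnitBasis.
Variables (R : realFieldType) (n : nat) (e : nat -> 'rV[R]_n).
Hypothesis e_unit : forall i, (1 <= i <= n)%N -> dotv (e i) (e i) = 1.

Local Notation g i j := (dotv (e i) (e j)).

Lemma gramC i j : g i j = g j i.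
Proof. exact: dotvC. Qed.

Lemma Mk_form k v : (1 <= k <= n)%N -> v *m Mk e k = dotv v (e k) *: e k.
Proof.
move=> Hk; apply: oproj_line => [||r]; rewrite ?e_unit //.
by rewrite row_id e_unit // mulr1.
Qed.

Lemma Mk'_dot k u w : (1 <= k <= n)%N ->
  dotv (u *m Mk' e k) (w *m Mk' e k) = dotv u w - dotv u (e k) * dotv w (e k).
Proof.
move=> Hk; rewrite /Mk' !mulmxBr !mulmx1 !Mk_form //.
rewrite !(dotvBl, dotvBr, dotvZl, dotvZr) e_unit // !(dotvC (e k)).
ring.
Qed.

Lemma Smx_rows (P : 'rV[R]_n -> Prop) k : P 0 ->
  (forall i, (0 < i <= k)%N -> (i <= n)%N -> P (e i)) -> forall r, P (row r (Smx e k)).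
Proof.
move=> P0 Pe r; have := ltn_ord r; rewrite rowK; case: ifP => // Hr Hrn.
by apply: Pe; lia.
Qed.

Lemma Tmx_rows (P : 'rV[R]_n -> Prop) k : P 0 ->
  (forall j, (k < j <= n)%N -> P (e j)) -> forall r, P (row r (Tmx e (n - k))).
Proof.
move=> P0 Pe r; have := ltn_ord r; rewrite rowK; case: ifP => // Hr Hrn.
by apply: Pe; lia.
Qed.

Lemma e_in_Smx k i : (0 < i <= k)%N -> (i <= n)%N -> (e i <= Smx e k)%MS.
Proof.
move=> Hik Hin; have Hr : (i.-1 < n)%N by lia.
have := row_sub (Ordinal Hr) (Smx e k); rewrite rowK /= ifT ?prednK //; lia.
Qed.

Lemma e_in_Tmx k j : (k < j <= n)%N -> (e j <= Tmx e (n - k))%MS.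
Proof.
move=> Hkj; have Hr : (j.-1 < n)%N by lia.
have := row_sub (Ordinal Hr) (Tmx e (n - k)); rewrite rowK /= ifT ?prednK //; lia.
Qed.

Definition gram_factor : Prop := forall i k j,
  (0 < i)%N -> (i < k < j)%N -> (j <= n)%N -> g i j = g i k * g k j.

Definition gram_chain : Prop := forall i j,
  (0 < i < j)%N -> (j <= n)%N -> g i j = \prod_(i <= l < j) g l l.+1.

Lemma chain_factor : gram_chain -> gram_factor.
Proof.
move=> Hchain i k j Hi Hikj Hjn.
rewrite Hchain; try lia.
by rewrite (big_cat_nat _ (n := k)) -?Hchain //; lia.
Qed.

Lemma chain_of_left_steps :
  (forall j k, (0 < j <= k)%N -> (k < n)%N -> g k.+1 j = g k.+1 k * g k j) ->
  gram_chain.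
Proof.
move=> Hstep i j; elim: j => [|j IH] Hij Hjn; first by lia.
have [->|Hlt] := eqVneq i j; first by rewrite big_nat1.
rewrite big_nat_recr /=; last by lia.
rewrite -IH; try lia.
rewrite gramC Hstep; try lia.
by rewrite !(gramC j) mulrC.
Qed.

Lemma chain_of_right_steps :
  (forall k j, (0 < k < j)%N -> (j <= n)%N -> g k j = g k k.+1 * g k.+1 j) ->
  gram_chain.
Proof.
move=> Hstep i j Hij Hjn.
have [d Hd] : exists d, j = (i + d.+1)%N by exists (j - i.+1)%N; lia.
elim: d i Hd Hij => [|d IH] i Hd Hij; first by rewrite Hd addn1 big_nat1.
rewrite big_ltn; last by lia.
rewrite Hstep; try lia.
by rewrite IH //; lia.
Qed.

Lemma gram_factor_weak : gram_factor -> forall i k j,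
  (0 < i <= k)%N -> (k <= j <= n)%N -> g i j = g i k * g k j.
Proof.
move=> Hfac i k j Hik Hkj.
have [<-|Hik'] := eqVneq i k; first by rewrite e_unit ?mul1r //; lia.
have [<-|Hkj'] := eqVneq k j; first by rewrite e_unit ?mulr1 //; lia.
by apply: Hfac; lia.
Qed.

Definition condition_a : Prop := forall k, (1 <= k <= n - 1)%N ->
  forall v : 'rV[R]_n, (v <= Tmx e (n - k))%MS -> v *m Pk e k = v *m Mk e k.
Definition condition_b : Prop := forall k, (1 <= k <= n - 1)%N ->
  parallel (e k.+1 *m Pk e k) (e k).
Definition condition_c : Prop := forall k, (2 <= k <= n - 1)%N ->
  forall u w : 'rV[R]_n, (u <= Smx e k.-1)%MS -> (w <= Tmx e (n - k))%MS ->
  dotv (u *m Mk' e k) (w *m Mk' e k) = 0.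
Definition condition_d : Prop := forall k, (1 <= k <= n - 1)%N ->
  forall v : 'rV[R]_n, (v <= Smx e k)%MS -> v *m Qk e (n - k) = v *m Mk e k.+1.
Definition condition_e : Prop := forall k, (1 <= k <= n - 1)%N ->
  parallel (e k *m Qk e (n - k)) (e k.+1).

Lemma a_implies_b : condition_a -> condition_b.
Proof.
move=> Ha k Hk; exists (g k.+1 k).
rewrite Ha ?e_in_Tmx ?Mk_form //; lia.
Qed.

Lemma d_implies_e : condition_d -> condition_e.
Proof.
move=> Hd k Hk; exists (g k k.+1).
rewrite Hd ?e_in_Smx ?Mk_form //; lia.
Qed.

Lemma b_implies_gram : condition_b -> gram_factor.
Proof.
move=> Hb; apply/chain_factor/chain_of_left_steps => j k Hjk Hkn.
have [c Hc] := Hb k ltac:(lia).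
apply: (oproj_parallel_factor _ _ _ Hc); rewrite ?e_unit ?e_in_Smx //; lia.
Qed.

Lemma e_implies_gram : condition_e -> gram_factor.
Proof.
move=> He; apply/chain_factor/chain_of_right_steps => k j Hkj Hjn.
have [c Hc] := He k ltac:(lia).
apply: (oproj_parallel_factor _ _ _ Hc); rewrite ?e_unit ?e_in_Tmx //; lia.
Qed.

Lemma c_implies_gram : condition_c -> gram_factor.
Proof.
move=> Hc i k j Hi Hikj Hjn.
have Hi_S : (e i <= Smx e k.-1)%MS by apply: e_in_Smx; lia.
have Hj_T : (e j <= Tmx e (n - k))%MS by apply: e_in_Tmx; lia.
have /eqP := Hc k ltac:(lia) _ _ Hi_S Hj_T.
rewrite Mk'_dot; last lia.
by rewrite subr_eq0 (gramC j k) => /eqP.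
Qed.

Lemma gram_implies_c : gram_factor -> condition_c.
Proof.
move=> Hfac k Hk u w Hu Hw; apply: (dotv_eq0_on_spans _ Hu Hw).
apply: (Smx_rows (P := fun a => forall s,
  dotv (a *m Mk' e k) (row s (Tmx e (n - k)) *m Mk' e k) = 0)) => [s|i Hik Hin].
  by rewrite mul0mx dotv0l.
apply: (Tmx_rows (P := fun b => dotv (e i *m Mk' e k) (b *m Mk' e k) = 0)).
  by rewrite mul0mx dotv0r.
move=> j Hkj; rewrite Mk'_dot; last lia.
by rewrite (gramC j k) -Hfac ?subrr //; lia.
Qed.

Lemma gram_implies_a : gram_factor -> condition_a.
Proof.
move=> Hfac k Hk v Hv; apply: (mulmx_eq_on_span _ Hv).
apply: (Tmx_rows (P := fun a => a *m Pk e k = a *m Mk e k)) => [|j Hkj].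
  by rewrite !mul0mx.
rewrite [RHS]Mk_form; last by lia.
apply: oproj_line; rewrite ?e_unit ?e_in_Smx //; try lia.
apply: (Smx_rows (P := fun a => dotv (e j) a = g j k * dotv (e k) a)) => [|i Hik Hin].
  by rewrite !dotv0r mulr0.
rewrite gramC (gram_factor_weak Hfac (k := k)); try lia.
by rewrite mulrC (gramC i k) (gramC k j).
Qed.

Lemma gram_implies_d : gram_factor -> condition_d.
Proof.
move=> Hfac k Hk v Hv; apply: (mulmx_eq_on_span _ Hv).
apply: (Smx_rows (P := fun a => a *m Qk e (n - k) = a *m Mk e k.+1)) => [|i Hik Hin].
  by rewrite !mul0mx.
rewrite [RHS]Mk_form; last by lia.
apply: oproj_line; rewrite ?e_unit ?e_in_Tmx //; try lia.
apply: (Tmx_rows (P := fun a => dotv (e i) a = g i k.+1 * dotv (e k.+1) a)) => [|j Hkj].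
  by rewrite !dotv0r mulr0.
by rewrite (gram_factor_weak Hfac (k := k.+1)) //; lia.
Qed.

End UnitBasis.

Theorem proposition3 (R : realFieldType) (n : nat) (e : nat -> 'rV[R]_n) :
  (3 <= n)%N -> unit_basis e ->
  [<->
   (* (a) *)
   (forall k, (1 <= k <= n - 1)%N -> forall v : 'rV[R]_n,
      (v <= Tmx e (n - k))%MS -> v *m Pk e k = v *m Mk e k);
   (* (b) *)
   (forall k, (1 <= k <= n - 1)%N -> parallel (e k.+1 *m Pk e k) (e k));
   (* (c) *)
   (forall k, (2 <= k <= n - 1)%N -> forall u w : 'rV[R]_n,
      (u <= Smx e k.-1)%MS -> (w <= Tmx e (n - k))%MS ->
      dotv (u *m Mk' e k) (w *m Mk' e k) = 0);
   (* (d) *)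
   (forall k, (1 <= k <= n - 1)%N -> forall v : 'rV[R]_n,
      (v <= Smx e k)%MS -> v *m Qk e (n - k) = v *m Mk e k.+1);
   (* (e) *)
   (forall k, (1 <= k <= n - 1)%N -> parallel (e k *m Qk e (n - k)) (e k.+1))].
Proof.
move=> _ [_ e_unit]; tfae.
- exact: a_implies_b.
- by move=> /(b_implies_gram e_unit) /(gram_implies_c e_unit).
- by move=> /(c_implies_gram e_unit) /(gram_implies_d e_unit).
- exact: d_implies_e.
- by move=> /(e_implies_gram e_unit) /(gram_implies_a e_unit).
Qed.
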